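(* Let $a<b$ and let $f:[a,b]\rightarrow\mathbb{R}$ be a twice continuously differentiable mapping in $(a,b)$ with $f''\in L^2[a,b]$. Assume additionally that $f(a+b-x)=f(x)$ for all $x\in[a,b]$. Then for all $x\in[a,\frac{a+b}{2}]$, \[ \left|f(x)-\frac{1}{b-a}\int_{a}^{b}f(t)\,dt\right|\leq \frac{(b-a)^{1/2}}{\pi}\left[\frac{(b-a)^2}{48}+\left(x-\frac{3a+b}{4}\right)^2\right]^{1/2}\|f''\|_2. \]
   Context: $\|g\|_2=\left(\int_a^b g(t)^2\,dt\right)^{1/2}$. *)

From HB Require Import structures.
From mathcomp Require Import all_boot all_order all_algebra.
From mathcomp Require Import all_classical all_reals all_analysis.
Set Implicit Arguments. Unset Strict Implicit. Unset Printing Implicit Defensive.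
Import Order.TTheory GRing.Theory Num.Theory.
Import numFieldNormedType.Exports.
Local Open Scope classical_set_scope.
Local Open Scope ring_scope.

Definition L2_on (R : realType) (a b : R) (g : R -> R) : Prop :=
  measurable_fun `[a, b] g /\
  (\int[@lebesgue_measure R]_(t in `[a, b]) ((g t) ^+ 2)%:E < +oo)%E.

Definition L2norm (R : realType) (a b : R) (g : R -> R) : R :=
  Num.sqrt (fine (\int[@lebesgue_measure R]_(t in `[a, b]) ((g t) ^+ 2)%:E)%E).

Definition mean_on (R : realType) (a b : R) (f : R -> R) : R :=
  (b - a)^-1 * Rintegral (@lebesgue_measure R) `[a, b] f.

From HB Require Import structures.
From mathcomp Require Import all_boot all_order all_algebra.
From mathcomp Require Import all_classical all_reals all_analysis.
From mathcomp Require Import ring lra.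
Set Implicit Arguments. Unset Strict Implicit. Unset Printing Implicit Defensive.
Import Order.TTheory GRing.Theory Num.Theory.
Import numFieldNormedType.Exports.
Local Open Scope classical_set_scope.
Local Open Scope ring_scope.

(** Fix [c] in [(a, m)], [m = (a+b)/2], and [y] in [[c, m]].  Cut [[c, a+b-c]] at [y], [m],
    [a+b-y]; on each piece, with a base point [e] and a pole [z] at an end of the piece,
    [u |-> ∫ f''^2 - Λ u] is nondecreasing, where [Λ] combines [(u-e) f u - ∫ f] and
    [(u-e)^3] with the Riccati term [k tan (k (u-z)) f'(u)^2], [k = π/(b-a)]: its derivative
    is a sum of two squares.  Since [f'(m) = 0] and [f(a+b-y) = f(y)], the four increments
    telescope to [2|I| <= τ S + ‖f''‖² / (k² τ)] for all [τ > 0], where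
    [I = (a+b-2c) f(y) - ∫_c^{a+b-c} f]; optimizing in [τ] gives [|I| <= √S ‖f''‖ / k],
    and [c -> a+] gives the claim. *)

Lemma abs_le_sqrtM_of_amgm {R : realType} (I S Q : R) : 0 < S -> 0 <= Q ->
  (forall tau, 0 < tau -> 2 * `|I| <= tau * S + Q / tau) ->
  `|I| <= Num.sqrt S * Num.sqrt Q.
Proof.
move=> S_gt0 Q_ge0 amgm.
have [Q0|Q_neq0] := eqVneq Q 0.
  rewrite Q0 sqrtr0 mulr0 le_eqVlt; case: ltrgt0P => I_gt0 //.
  have := amgm _ (divr_gt0 I_gt0 S_gt0).
  by rewrite Q0 mul0r addr0 divfK ?gt_eqF //; lra.
have sS : 0 < Num.sqrt S by rewrite sqrtr_gt0.
have sQ : 0 < Num.sqrt Q by rewrite sqrtr_gt0 lt_def Q_neq0.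
have := amgm _ (divr_gt0 sQ sS).
have -> : Num.sqrt Q / Num.sqrt S * S + Q / (Num.sqrt Q / Num.sqrt S)
   = 2 * (Num.sqrt S * Num.sqrt Q).
  by rewrite -{2}(sqr_sqrtr (ltW S_gt0)) -{2}(sqr_sqrtr Q_ge0); field; rewrite !gt_eqF.
lra.
Qed.

(* [∫_c^{a+b-c} (t - e t)^2 dt], where [e] is [c], [(a+b)/2], [(a+b)/2], [a+b-c] on the four
   pieces cut at [y], [(a+b)/2], [a+b-y]. *)
Definition kernel_sqnorm {R : fieldType} (a b c y : R) : R :=
  2 * ((y - c) ^+ 3 + ((a + b) / 2 - y) ^+ 3) / 3.

Section lyapunov.
Context {R : realType}.
Variables (a b k tau sg : R) (f F df d2f G : R -> R).
Hypothesis sg_sqr : sg ^+ 2 = 1.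
Hypothesis Df : forall t, a < t < b -> is_derive t 1 f (df t).
Hypothesis DF : forall t, a < t < b -> is_derive t 1 F (f t).
Hypothesis Ddf : forall t, a < t < b -> is_derive t 1 df (d2f t).
Hypothesis DG : forall t, a < t < b -> is_derive t 1 G (d2f t ^+ 2).

(* [sg = ±1] selects the sign of the deviation being bounded. *)
Definition lyapunov (e z u : R) : R :=
  tau * k ^+ 2 * (2 * sg * ((u - e) * f u - F u) - tau / 3 * (u - e) ^+ 3)
  - k * tan (k * (u - z)) * df u ^+ 2.

Lemma is_derive_slack e z t : a < t < b -> cos (k * (t - z)) != 0 ->
  is_derive t 1 (fun u => G u - lyapunov e z u)
    ((d2f t + k * tan (k * (t - z)) * df t) ^+ 2
     + k ^+ 2 * (tau * (t - e) - sg * df t) ^+ 2).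
Proof.
move=> tab cos_neq0.
have Dshift c : is_derive t 1 (fun u : R => u - c) 1.
  by have := is_deriveB (is_derive_id t 1) (is_derive_cst c t 1); rewrite subr0.
have Dtan : is_derive t 1 (fun u => tan (k * (u - z))) ((cos (k * (t - z)))^-2 * k).
  have Darg : is_derive t 1 (fun u => k * (u - z)) k.
    by have := is_deriveZ k (Dshift z); rewrite [_ *: _]mulr1.
  exact: (@is_derive1_comp _ tan (fun u => k * (u - z)) t _ _
    (is_derive_tan cos_neq0) Darg).
have D : is_derive t 1 (fun u => G u - lyapunov e z u) _ :=
  is_deriveB (DG tab) (is_deriveB
    (is_deriveM (is_derive_cst (tau * k ^+ 2) t 1) (is_deriveB
      (is_deriveM (is_derive_cst (2 * sg) t 1)
        (is_deriveB (is_deriveM (Dshift e) (Df tab)) (DF tab)))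
      (is_deriveM (is_derive_cst (tau / 3) t 1) (is_deriveX 3 (Dshift e)))))
    (is_deriveM (is_deriveM (is_derive_cst k t 1) Dtan) (is_deriveX 2 (Ddf tab)))).
apply: is_derive_eq D _.
have scaleE (x y : R) : x *: y = x * y by [].
rewrite !fctE !scaleE cos2_tan2 //=.
transitivity ((d2f t + k * tan (k * (t - z)) * df t) ^+ 2
    + k ^+ 2 * (tau * (t - e) - sg * df t) ^+ 2 + k ^+ 2 * df t ^+ 2 * (1 - sg ^+ 2)).
  by field.
by rewrite sg_sqr subrr mulr0 addr0.
Qed.

Lemma lyapunov_increment_le e z p q : 0 < k -> a < p -> p <= q -> q < b ->
  - (pi / 2) < k * (p - z) -> k * (q - z) < pi / 2 ->
  lyapunov e z q - lyapunov e z p <= G q - G p.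
Proof.
move=> k_gt0 ap pq qb pz qz.
have in_ab t : p <= t <= q -> a < t < b.
  by move=> /andP[pt tq]; rewrite (lt_le_trans ap pt) (le_lt_trans tq qb).
have cos_neq0 t : p <= t <= q -> cos (k * (t - z)) != 0.
  move=> /andP[pt tq]; apply/lt0r_neq0/cos_gt0_pihalf/andP; split; nra.
have Dslack t (ptq : p <= t <= q) :=
  @is_derive_slack e z t (in_ab t ptq) (cos_neq0 t ptq).
have in_pq t : t \in `]p, q[ -> p <= t <= q by rewrite in_itv /= => /andP[/ltW-> /ltW->].
have : G p - lyapunov e z p <= G q - lyapunov e z q.
  apply: (@ger0_derive1_ndecr _ (fun u => G u - lyapunov e z u) p q) => //.
  - by move=> t /in_pq/Dslack[].
  - move=> t /in_pq/Dslack D; rewrite derive1E derive_val.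
    by apply: addr_ge0; [exact: sqr_ge0 | apply: mulr_ge0; exact: sqr_ge0].
  - apply: (@derivable_within_continuous _ _ _ `[p, q]) => t.
    by rewrite in_itv /= => /Dslack[].
lra.
Qed.

Lemma lyapunov_four_pieces c y : 0 < k -> k * (b - a) <= pi ->
  a < c -> c <= y -> y <= (a + b) / 2 ->
  f (a + b - y) = f y -> df ((a + b) / 2) = 0 ->
  tau * k ^+ 2 * (2 * sg * ((a + b - 2 * c) * f y - (F (a + b - c) - F c))
    - tau * kernel_sqnorm a b c y) <= G (a + b - c) - G c.
Proof.
move=> k_gt0 kpi ac cy ym fyb dfm.
have k_half : k * ((a + b) / 2 - c) < pi / 2.
  have : 0 < k * (c - a) by rewrite mulr_gt0 ?subr_gt0.
  lra.
have k_lt u v : v - u <= (a + b) / 2 - c -> k * (v - u) < pi / 2.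
  by move=> h; apply: le_lt_trans k_half; apply: ler_wpM2l => //; exact: ltW.
have k_gt u v : u - v <= (a + b) / 2 - c -> - (pi / 2) < k * (v - u).
  by move=> /k_lt; rewrite -(opprB u v) mulrN ltrN2.
have P1 := @lyapunov_increment_le c c c y k_gt0 ac cy ltac:(lra)
  (k_gt c c ltac:(lra)) (k_lt c y ltac:(lra)).
have P2 := @lyapunov_increment_le ((a + b) / 2) c y ((a + b) / 2) k_gt0
  ltac:(lra) ym ltac:(lra) (k_gt c y ltac:(lra)) (k_lt c ((a + b) / 2) ltac:(lra)).
have P3 := @lyapunov_increment_le ((a + b) / 2) (a + b - c) ((a + b) / 2) (a + b - y) k_gt0
  ltac:(lra) ltac:(lra) ltac:(lra)
  (k_gt (a + b - c) ((a + b) / 2) ltac:(lra)) (k_lt (a + b - c) (a + b - y) ltac:(lra)).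
have P4 := @lyapunov_increment_le (a + b - c) (a + b - c) (a + b - y) (a + b - c) k_gt0
  ltac:(lra) ltac:(lra) ltac:(lra)
  (k_gt (a + b - c) (a + b - y) ltac:(lra)) (k_lt (a + b - c) (a + b - c) ltac:(lra)).
have tan_c : tan (k * (c - c)) = 0 by rewrite subrr mulr0 tan0.
have tan_d : tan (k * ((a + b - c) - (a + b - c))) = 0 by rewrite subrr mulr0 tan0.
move: (lerD (lerD (lerD P1 P2) P3) P4).
set L := (X in X <= _); set U := (X in _ <= X) => S.
rewrite (_ : G (a + b - c) - G c = U); last by rewrite /U; ring.
rewrite [X in X <= _](_ : _ = L) //.
rewrite /L /lyapunov tan_c tan_d dfm fyb /kernel_sqnorm.
by field.
Qed.
End lyapunov.

Lemma is_derive_integral {R : realType} (h : R -> R) (a b t : R) :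
  (@lebesgue_measure R).-integrable `[a, b] (EFin \o h) -> a < t < b ->
  {for t, continuous h} ->
  is_derive t 1 (fun x => \int[@lebesgue_measure R]_(u in `[a, x]) h u) (h t).
Proof.
move=> h_int /andP[ta tb] h_cont.
have [Dh <-] := continuous_FTC1_closed tb h_int ta h_cont.
by rewrite derive1E; apply: derivableP.
Qed.

Section symmetric.
Context {R : realType} (a b : R) (f : R -> R).
Hypothesis ab : a < b.
Hypothesis f_cont : {within `[a, b], continuous f}.
Hypothesis f_der : forall x, x \in `]a, b[ -> derivable f x 1.
Hypothesis df_der : forall x, x \in `]a, b[ -> derivable (derive1 f) x 1.
Hypothesis d2f_cont : {in `]a, b[, continuous (derive1n 2 f)}.
Hypothesis d2f_L2 : L2_on a b (derive1n 2 f).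
Hypothesis f_sym : forall x, x \in `[a, b] -> f (a + b - x) = f x.

Notation mu := (@lebesgue_measure R).
Let df := derive1 f.
Let d2f := derive1n 2 f.
Let F t := \int[mu]_(u in `[a, t]) f u.
Let G t := \int[mu]_(u in `[a, t]) (d2f u ^+ 2).

Let in_ab t : a < t < b -> t \in `]a, b[.
Proof. by rewrite in_itv. Qed.

Lemma is_derive_f t : a < t < b -> is_derive t 1 f (df t).
Proof. by move=> /in_ab/f_der Df; rewrite /df derive1E; apply: derivableP. Qed.

Lemma is_derive_df t : a < t < b -> is_derive t 1 df (d2f t).
Proof. by move=> /in_ab/df_der Ddf; rewrite /d2f /= derive1E; apply: derivableP. Qed.

Let f_int : mu.-integrable `[a, b] (EFin \o f).
Proof. by apply: continuous_compact_integrable => //; exact: segment_compact. Qed.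

Lemma is_derive_F t : a < t < b -> is_derive t 1 F (f t).
Proof.
move=> tab; apply: (is_derive_integral f_int tab).
apply: differentiable_continuous; apply/derivable1_diffP.
exact: f_der (in_ab tab).
Qed.

Lemma is_derive_G t : a < t < b -> is_derive t 1 G (d2f t ^+ 2).
Proof.
move=> tab; apply: (is_derive_integral _ tab); last first.
  by have C := d2f_cont (in_ab tab); have := continuousM C C.
case: d2f_L2 => d2f_meas d2f_fin; apply/integrableP; split.
  exact/measurable_realfun.measurable_EFinP/measurable_realfun.measurable_funX.
apply: le_lt_trans d2f_fin; rewrite le_eqVlt; apply/orP; left; apply/eqP.
by apply: eq_integral => u _ /=; rewrite ger0_norm ?sqr_ge0.
Qed.

Lemma derive1_midpoint_eq0 : df ((a + b) / 2) = 0.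
Proof.
set m := (a + b) / 2.
have mab : a < m < b by rewrite /m (midf_lt ab).1 (midf_lt ab).2.
have reflect_m : a + b - m = m by rewrite /m; field.
have Dreflect : is_derive m 1 (fun u => a + b - u) (-1).
  by have := is_deriveB (is_derive_cst (a + b) m 1) (is_derive_id m 1); rewrite sub0r.
have Df_reflect : is_derive m 1 (fun u => f (a + b - u)) (df (a + b - m) * -1).
  apply: (@is_derive1_comp _ f (fun u => a + b - u) m _ _ _ Dreflect).
  by apply: is_derive_f; rewrite reflect_m.
rewrite reflect_m in Df_reflect.
have [_ ] : is_derive m 1 f (df m * -1).
  apply: near_eq_is_derive Df_reflect.
  apply: filterS (near_in_itvoo (in_ab mab)) => u; rewrite in_itv /= => /andP[au ub].
  by apply: f_sym; rewrite in_itv /= !ltW.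
rewrite -derive1E -/df; lra.
Qed.

Lemma G_ge0 t : 0 <= G t.
Proof. by apply: Rintegral_ge0 => u _; exact: sqr_ge0. Qed.

Lemma G_le t : a <= t -> t <= b -> G t <= G b.
Proof.
move=> ta tb; case: d2f_L2 => d2f_meas d2f_fin.
have sq_ge0 u : [set` `[a, b]] u -> (0 <= (d2f u ^+ 2)%:E)%E.
  by rewrite lee_fin sqr_ge0.
have le_int : (\int[mu]_(u in `[a, t]) (d2f u ^+ 2)%:E
                <= \int[mu]_(u in `[a, b]) (d2f u ^+ 2)%:E)%E.
  apply: ge0_subset_integral => //; last by apply: subset_itvl; rewrite bnd_simp.
  exact/measurable_realfun.measurable_EFinP/measurable_realfun.measurable_funX.
have int_ge0 s : (0 <= \int[mu]_(u in `[a, s]) (d2f u ^+ 2)%:E)%E.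
  by apply: integral_ge0 => u _; rewrite lee_fin sqr_ge0.
apply: (fine_le _ _ le_int); rewrite ge0_fin_numE //.
exact: le_lt_trans le_int d2f_fin.
Qed.

Let k := pi / (b - a).

Lemma abs_deviation_le c y : a < c -> c < (a + b) / 2 -> c <= y -> y <= (a + b) / 2 ->
  `|(a + b - 2 * c) * f y - (F (a + b - c) - F c)| <=
    Num.sqrt (kernel_sqnorm a b c y) * (Num.sqrt (G b) / k).
Proof.
move=> ac cm cy ym.
set I := (a + b - 2 * c) * f y - _; set S := kernel_sqnorm a b c y.
have y_ab : y \in `[a, b] by rewrite in_itv /=; apply/andP; split; lra.
have k_gt0 : 0 < k by rewrite divr_gt0 ?pi_gt0 ?subr_gt0.
have kpi : k * (b - a) <= pi by rewrite divfK ?gt_eqF ?subr_gt0.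
have S_gt0 : 0 < S.
  rewrite /S /kernel_sqnorm !pmulr_lgt0 //.
  have [cy'|yc] := ltP c y.
    by rewrite ltr_wpDr ?exprn_ge0 ?subr_ge0 // exprn_gt0 // subr_gt0.
  by rewrite ltr_wpDl ?exprn_ge0 ?subr_ge0 // exprn_gt0 // subr_gt0 (le_lt_trans yc).
have sqrtQ : Num.sqrt (G b / k ^+ 2) = Num.sqrt (G b) / k.
  by rewrite sqrtrM ?G_ge0 // sqrtrV ?sqr_ge0 // sqrtr_sqr gtr0_norm.
rewrite -sqrtQ; apply: abs_le_sqrtM_of_amgm => //.
  by rewrite divr_ge0 ?G_ge0 ?sqr_ge0.
move=> tau tau_gt0.
have bound sg : sg ^+ 2 = 1 -> 2 * sg * I <= tau * S + G b / k ^+ 2 / tau.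
  move=> sg2.
  have P := lyapunov_four_pieces tau sg2 is_derive_f is_derive_F is_derive_df
    is_derive_G k_gt0 kpi ac cy ym (f_sym y_ab) derive1_midpoint_eq0.
  have Gd := @G_le (a + b - c) ltac:(lra) ltac:(lra).
  have Gc := G_ge0 c.
  suff : 2 * sg * I - tau * S <= G b / (tau * k ^+ 2).
    rewrite (_ : G b / k ^+ 2 / tau = G b / (tau * k ^+ 2)); first lra.
    by field; rewrite !gt_eqF.
  rewrite ler_pdivlMr; last by rewrite mulr_gt0 // exprn_gt0.
  rewrite -/I -/S in P; lra.
have [I_ge0|I_lt0] := leP 0 I.
  by rewrite ger0_norm //; have := bound 1 (expr1n _ _); lra.
by rewrite ltr0_norm //; have := bound (-1) (etrans (sqrrN 1) (expr1n _ _)); lra.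
Qed.

(* [f] need not be differentiable at [a], hence the limit [c -> a+]. *)
Lemma abs_deviation_le_lim (y : R -> R) (x : R) :
  (\forall c \near a^'+, c <= y c <= (a + b) / 2) ->
  y c @[c --> a^'+] --> x -> f (y c) @[c --> a^'+] --> f x ->
  `|(b - a) * f x - F b| <= Num.sqrt (kernel_sqnorm a b a x) * (Num.sqrt (G b) / k).
Proof.
move=> y_near y_cvg fy_cvg.
have [_ Fa_cvg Fb_cvg] :=
  (continuous_within_itvP _ ab).1 (parameterized_integral_continuous (ltW ab) f_int).
have c_cvg : c @[c --> a^'+] --> a := cvg_at_right_filter cvg_id.
have Fd_cvg : F (a + b - c) @[c --> a^'+] --> F b.
  apply: (@decreasing_cvg_at_right_comp _ (fun c => a + b - c) F a (BLeft b)).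
  - by rewrite bnd_simp.
  - by move=> u v _ _ uv; rewrite ltrD2l ltrN2.
  - by apply: cvgB => //; exact: cvg_cst.
  - by rewrite (_ : a + b - a = b) //; ring.
have cube_cvg (u : R -> R) (l : R) :
    u c @[c --> a^'+] --> l -> u c ^+ 3 @[c --> a^'+] --> l ^+ 3.
  move=> u_cvg; apply: (@continuous_cvg _ _ _ _ _ u (fun v : R => v ^+ 3)) => //.
  exact: exprn_continuous.
have lhs_cvg : `|(a + b - 2 * c) * f (y c) - (F (a + b - c) - F c)| @[c --> a^'+] -->
    `|(a + b - 2 * a) * f x - (F b - F a)|.
  apply: cvg_norm; apply: cvgB; last exact: cvgB.
  apply: cvgM => //; apply: cvgB; [exact: cvg_cst | exact: cvgMr].
have rhs_cvg : Num.sqrt (kernel_sqnorm a b c (y c)) * (Num.sqrt (G b) / k) @[c --> a^'+] -->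
    Num.sqrt (kernel_sqnorm a b a x) * (Num.sqrt (G b) / k).
  apply: cvgM; last exact: cvg_cst.
  apply: (@cvg_comp _ _ _ (fun c => kernel_sqnorm a b c (y c)) Num.sqrt).
    2: exact: sqrt_continuous.
  apply: cvgM; last exact: cvg_cst.
  apply: cvgM; first exact: cvg_cst.
  apply: cvgD; apply: cube_cvg; first exact: cvgB.
  by apply: cvgB => //; exact: cvg_cst.
have F_a : F a = 0 by rewrite /F set_itv1 Rintegral_set1.
have -> : (b - a) * f x - F b = (a + b - 2 * a) * f x - (F b - F a).
  by rewrite F_a; ring.
apply: (ler_cvg_to lhs_cvg rhs_cvg).
have mab : a < (a + b) / 2 by rewrite (midf_lt ab).1.
near=> c; apply: abs_deviation_le.
- by near: c; exact: nbhs_right_gt.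
- by near: c; exact: nbhs_right_lt.
- by near: c; apply: filterS y_near => u /andP[].
- by near: c; apply: filterS y_near => u /andP[].
Unshelve. all: by end_near.
Qed.

Lemma abs_deviation_le_at x : a <= x -> x <= (a + b) / 2 ->
  `|(b - a) * f x - F b| <= Num.sqrt (kernel_sqnorm a b a x) * (Num.sqrt (G b) / k).
Proof.
move=> ax xm.
have [ax'|xa] := ltP a x.
  apply: (@abs_deviation_le_lim (fun=> x)); [|exact: cvg_cst|exact: cvg_cst].
  by near=> c; rewrite xm andbT ltW //; near: c; exact: nbhs_right_lt.
have -> : x = a by apply/eqP; rewrite eq_le xa ax.
have mab : a < (a + b) / 2 by rewrite (midf_lt ab).1.
apply: (@abs_deviation_le_lim id); [|exact: cvg_at_right_filter cvg_id|].
  by near=> c; rewrite lexx ltW //; near: c; exact: nbhs_right_lt.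
by have [_ fa _] := (continuous_within_itvP _ ab).1 f_cont.
Unshelve. all: by end_near.
Qed.

End symmetric.

Theorem corollary2p8 (R : realType) (a b : R) (f : R -> R) :
  a < b ->
  {within `[a, b], continuous f} ->
  (forall x, x \in `]a, b[ -> derivable f x 1) ->
  (forall x, x \in `]a, b[ -> derivable (derive1 f) x 1) ->
  {in `]a, b[, continuous (derive1n 2 f)} ->
  L2_on a b (derive1n 2 f) ->
  (forall x, x \in `[a, b] -> f (a + b - x) = f x) ->
  forall x, x \in `[a, (a + b) / 2] ->
    `| f x - mean_on a b f | <=
      Num.sqrt (b - a) / pi *
      Num.sqrt ((b - a) ^+ 2 / 48 + (x - (3 * a + b) / 4) ^+ 2) *
      L2norm a b (derive1n 2 f).
Proof.
move=> ab f_cont f_der df_der d2f_cont d2f_L2 f_sym x.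
rewrite in_itv /= => /andP[ax xm].
have dev := abs_deviation_le_at ab f_cont f_der df_der d2f_cont d2f_L2 f_sym ax xm.
have ba : 0 < b - a by rewrite subr_gt0.
have kernelE : kernel_sqnorm a b a x =
    (b - a) * ((b - a) ^+ 2 / 48 + (x - (3 * a + b) / 4) ^+ 2).
  by rewrite /kernel_sqnorm; field.
move: dev; rewrite /mean_on /L2norm /Rintegral kernelE (sqrtrM _ (ltW ba)).
set I := fine _; set J := Num.sqrt (fine _) => dev.
rewrite (_ : f x - _ = ((b - a) * f x - I) / (b - a)); last by field; rewrite gt_eqF.
rewrite normrM normfV (gtr0_norm ba) ler_pdivrMr //.
apply: (le_trans dev); rewrite le_eqVlt; apply/orP; left; apply/eqP.
(* hide [pi] from [field], which would unfold it *)
have := pi_gt0 R; move: (pi : R) => p p_gt0.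
by field; rewrite !gt_eqF.
Qed.
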